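(* Let $(M,\star)$ be a Banach algebra and $e\in M$ a right identity (i.e. $\mu\star e=\mu$ for all $\mu\in M$). Then $Z_t((e\star M)'')=Z_t(M'')\cap(e\star M)''$.
   Context: Left Arens product on $M''$: for $h\in M'$, $\mu,\nu\in M$, $\mathbf m,\mathbf n\in M''$, $\langle h\cdot\mu,\nu\rangle=\langle h,\mu\star\nu\rangle$, $\langle\mathbf n\odot h,\mu\rangle=\langle\mathbf n,h\cdot\mu\rangle$, $\langle\mathbf m\square\mathbf n,h\rangle=\langle\mathbf m,\mathbf n\odot h\rangle$. (Left) topological centre: $Z_t(M'')=\{\mathbf m\in M'':\ \mathbf n\mapsto\mathbf m\square\mathbf n\text{ is weak}^*\text{-continuous on }M''\}$. $e\star M=\{e\star\mu:\mu\in M\}$ is a closed subalgebra; its bidual $(e\star M)''$ is identified with its weak$^*$-closure in $M''$, on which the Arens product of $M''$ restricts to that of $(e\star M)''$, and $Z_t((e\star M)'')$ is the topological centre of the Banach algebra $e\star M$. *)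

From HB Require Import structures.
From mathcomp Require Import all_boot all_order all_algebra.
From mathcomp Require Import all_classical all_reals all_analysis.
Set Implicit Arguments. Unset Strict Implicit. Unset Printing Implicit Defensive.
Import Order.TTheory GRing.Theory Num.Theory.
Import numFieldNormedType.Exports.
Local Open Scope classical_set_scope.
Local Open Scope ring_scope.

Section Arens.
Variables (K : numFieldType) (M : normedModType K).

Definition banach_algebra_mul (star : M -> M -> M) : Prop :=
  [/\ forall x y z, star x (star y z) = star (star x y) z,
      forall (a : K) x y z, star (a *: x + y) z = a *: star x z + star y z,
      forall (a : K) x y z, star z (a *: x + y) = a *: star z x + star z y
    & forall x y, `|star x y| <= `|x| * `|y| ].

(* A subspace A of M (here always either M itself or e*M) is used as the
   underlying Banach algebra.  A functional on A is represented by a function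
   M -> K; only its values on A matter. *)

Definition is_dual (A : set M) (h : M -> K) : Prop :=
  (forall (a : K) x y, A x -> A y -> h (a *: x + y) = a * h x + h y) /\
  exists r : K, forall x, A x -> `|h x| <= r * `|x|.

Definition is_bidual (A : set M) (m : (M -> K) -> K) : Prop :=
  (forall (a : K) f g, is_dual A f -> is_dual A g ->
       m (fun x => a * f x + g x) = a * m f + m g) /\
  exists C : K, forall f (r : K), is_dual A f -> 0 <= r ->
       (forall x, A x -> `|f x| <= r * `|x|) -> `|m f| <= C * r.

(* Left Arens product:  <h.mu, nu> = <h, mu * nu>,
   <n (.) h, mu> = <n, h.mu>,  <m [] n, h> = <m, n (.) h>. *)
Definition dual_act (star : M -> M -> M) (h : M -> K) (mu : M) : M -> K :=
  fun nu => h (star mu nu).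
Definition bidual_act (star : M -> M -> M) (n : (M -> K) -> K) (h : M -> K)
  : M -> K := fun mu => n (dual_act star h mu).
Definition arens (star : M -> M -> M) (m n : (M -> K) -> K) : (M -> K) -> K :=
  fun h => m (bidual_act star n h).

(* Weak*-continuity (on A'', into A'') of a map Phi : A'' -> A''; the weak*
   topology on A'' is the initial topology of the evaluations at h in A'. *)
Definition weakstar_continuous (A : set M)
    (Phi : ((M -> K) -> K) -> ((M -> K) -> K)) : Prop :=
  forall n0, is_bidual A n0 ->
  forall h, is_dual A h ->
  forall eps : K, 0 < eps ->
  exists k : nat, exists hs : 'I_k -> M -> K, exists2 delta : K, 0 < delta &
    (forall i, is_dual A (hs i)) /\
    (forall n, is_bidual A n ->
       (forall i, `|n (hs i) - n0 (hs i)| < delta) ->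
       `|Phi n h - Phi n0 h| < eps).

Definition top_centre (star : M -> M -> M) (A : set M)
    (m : (M -> K) -> K) : Prop :=
  is_bidual A m /\ weakstar_continuous A (fun n => arens star m n).

Definition left_ideal_by (star : M -> M -> M) (e : M) : set M :=
  [set star e mu | mu in [set: M]].

(* (e*M)'' viewed inside M'' via the adjoint of the restriction map
   M' -> (e*M)' : m in M'' comes from m' in (e*M)'' iff m h = m' h for h in M'. *)
Definition represents (m m' : (M -> K) -> K) : Prop :=
  forall h, is_dual [set: M] h -> m h = m' h.

End Arens.

(* Write P h := h(e * .) (that is, dual_act star h e) for the restriction
   M' -> (e*M)' and P* n := n o P for its adjoint.  Associativity gives
   (h.mu).nu = h.(mu*nu), hence (n (.) h).mu = n (.) (h.mu); consequently
   P*m [] n = (m [] n) o P and, e being a right identity, P*n (.) h = n (.) h.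
   Since P and P* are weak*-continuous, these identities carry the
   weak*-continuity of n |-> m [] n from e*M to M and back.  Finally an element
   of (e*M)'' only sees functionals through their values on e*M, where P h = h
   because e * e = e. *)

From HB Require Import structures.
From mathcomp Require Import all_boot all_order all_algebra.
From mathcomp Require Import all_classical all_reals all_analysis.
From mathcomp Require Import ring.
Import Order.TTheory GRing.Theory Num.Theory.
Import numFieldNormedType.Exports.
Local Open Scope classical_set_scope.
Local Open Scope ring_scope.

Set Implicit Arguments.
Unset Strict Implicit.
Unset Printing Implicit Defensive.

Section Duals.
Variables (K : numFieldType) (M : normedModType K).
Implicit Types (A B : set M) (f g h : M -> K) (m n : (M -> K) -> K).

Lemma is_dual_sub A B h : A `<=` B -> is_dual B h -> is_dual A h.
Proof.
move=> AB [hlin [r hr]]; split.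
  by move=> a x y /AB Bx /AB By; exact: hlin.
by exists r => x /AB; exact: hr.
Qed.

Lemma is_bidual_sub A B n : A `<=` B -> is_bidual A n -> is_bidual B n.
Proof.
move=> AB [nlin [C nC]]; split.
  by move=> a f g /(is_dual_sub AB) Af /(is_dual_sub AB) Ag; exact: nlin.
exists C => f r /(is_dual_sub AB) Af r0 fr; apply: nC => // x /AB; exact: fr.
Qed.

Lemma is_dual_ge0_bound A h : is_dual A h ->
  exists2 r : K, 0 <= r & forall x, A x -> `|h x| <= r * `|x|.
Proof.
move=> [_ [r hr]]; exists `|r| => // x Ax.
have hx := hr x Ax; have rx_ge0 : 0 <= r * `|x| := le_trans (normr_ge0 _) hx.
by rewrite -[`|x|]normr_id -normrM ger0_norm.
Qed.

Lemma bidual_eq_on A m f g : is_bidual A m -> is_dual A f -> is_dual A g ->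
  (forall x, A x -> f x = g x) -> m f = m g.
Proof.
move=> [mlin [C mC]] Af Ag fg.
have Ad : is_dual A (fun x => -1 * g x + f x).
  case: Af Ag => [flin _] [glin _]; split; last first.
    by exists 0 => x Ax; rewrite fg // mulN1r addNr normr0 mul0r.
  by move=> a x y Ax Ay; rewrite flin // glin //; ring.
have : m (fun x => -1 * g x + f x) = 0.
  apply/eqP; rewrite -normr_le0 -(mulr0 C); apply: mC => // x Ax.
  by rewrite fg // mulN1r addNr normr0 mul0r.
by rewrite mlin // mulN1r addrC => /subr0_eq.
Qed.

Lemma weakstar_continuous_adjoint A B (T S : (M -> K) -> M -> K)
    (Phi Psi : ((M -> K) -> K) -> (M -> K) -> K) :
  (forall f, is_dual A f -> is_dual B (T f)) ->
  (forall h, is_dual B h -> is_dual A (S h)) ->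
  (forall n, is_bidual B n -> is_bidual A (n \o T)) ->
  (forall n h, is_bidual B n -> is_dual B h -> Psi n h = Phi (n \o T) (S h)) ->
  weakstar_continuous A Phi -> weakstar_continuous B Psi.
Proof.
move=> TBA SBA TAB PsiPhi PhiC n0 Bn0 h Bh eps eps_gt0.
have [k [hs [delta delta_gt0 [Ahs close]]]] :=
  PhiC _ (TAB _ Bn0) _ (SBA _ Bh) eps eps_gt0.
exists k, (T \o hs), delta => //; split=> [i|n Bn near_n0]; first exact: TBA.
by rewrite !PsiPhi //; apply: close => //; exact: TAB.
Qed.

End Duals.

Section ArensModule.
Variables (K : numFieldType) (M : normedModType K) (star : M -> M -> M).
Hypothesis star_ba : banach_algebra_mul star.
Implicit Types (A : set M) (mu nu : M) (f h : M -> K) (m n : (M -> K) -> K).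

Lemma dual_actM h mu nu :
  dual_act star (dual_act star h mu) nu = dual_act star h (star mu nu).
Proof.
by apply: funext => x; case: star_ba => starA _ _ _; rewrite /dual_act starA.
Qed.

Lemma dual_act_bidual_act n h mu :
  dual_act star (bidual_act star n h) mu = bidual_act star n (dual_act star h mu).
Proof. by apply: funext => nu; rewrite /bidual_act dual_actM. Qed.

Lemma arens_comp_act m n h mu :
  arens star (m \o dual_act star ^~ mu) n h = arens star m n (dual_act star h mu).
Proof. by rewrite /arens /= dual_act_bidual_act. Qed.

Lemma is_dual_act A h mu : (forall x, A (star mu x)) -> is_dual A h ->
  is_dual [set: M] (dual_act star h mu).
Proof.
move=> muA Ah; case: (Ah) => hlin _; case: star_ba => _ _ starDr star_norm.
split=> [a x y _ _|]; first by rewrite /dual_act starDr hlin.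
have [r r_ge0 hr] := is_dual_ge0_bound Ah.
exists (r * `|mu|) => x _; apply: (le_trans (hr _ (muA x))).
by rewrite -mulrA; apply: ler_wpM2l => //; exact: star_norm.
Qed.

Lemma is_dual_bidual_act n h : is_bidual [set: M] n -> is_dual [set: M] h ->
  is_dual [set: M] (bidual_act star n h).
Proof.
move=> [nlin [C nC]] Mh; have [hlin _] := Mh.
have Mact mu : is_dual [set: M] (dual_act star h mu).
  exact: is_dual_act (fun _ => I) Mh.
split=> [a x y _ _|].
  rewrite /bidual_act; have -> : dual_act star h (a *: x + y) =
      (fun nu => a * dual_act star h x nu + dual_act star h y nu).
    apply: funext => nu; case: star_ba => _ starDl _ _.
    by rewrite /dual_act starDl hlin.
  exact: nlin.
have [r r_ge0 hr] := is_dual_ge0_bound Mh.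
exists (C * r) => mu _; rewrite /bidual_act -mulrA; apply: nC => //.
  exact: mulr_ge0.
move=> x _; apply: (le_trans (hr _ I)); rewrite -mulrA.
by apply: ler_wpM2l => //; case: star_ba.
Qed.

Lemma is_bidual_comp_act A n mu : (forall x, A (star mu x)) ->
  is_bidual [set: M] n -> is_bidual A (n \o dual_act star ^~ mu).
Proof.
move=> muA [nlin [C nC]]; split=> [a f g Af Ag|].
  exact: nlin (is_dual_act muA Af) (is_dual_act muA Ag).
exists (C * `|mu|) => f r Af r_ge0 fr /=.
rewrite mulrAC -mulrA.
apply: nC; [exact: is_dual_act muA Af | exact: mulr_ge0 |].
move=> x _; apply: (le_trans (fr _ (muA x))); rewrite -mulrA.
by apply: ler_wpM2l => //; case: star_ba.
Qed.

Section RightIdentity.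
Variable e : M.
Hypothesis star1r : forall mu, star mu e = mu.

Local Notation eM := (left_ideal_by star e).

Lemma left_ideal_byP x : eM (star e x).
Proof. by exists x. Qed.

Lemma bidual_act_comp_act n h :
  bidual_act star (n \o dual_act star ^~ e) h = bidual_act star n h.
Proof. by apply: funext => mu; rewrite /bidual_act /= dual_actM star1r. Qed.

Lemma top_centre_of_left_ideal m m' : is_bidual [set: M] m ->
  top_centre star eM m' -> represents m m' -> top_centre star [set: M] m.
Proof.
move=> Mm [_ m'C] mm'; split=> //.
apply: (weakstar_continuous_adjoint (T := dual_act star ^~ e) (S := id)) m'C.
- by move=> f; apply: is_dual_act left_ideal_byP.
- by move=> h; apply: is_dual_sub.
- by move=> n; apply: is_bidual_comp_act left_ideal_byP.
move=> n h Mn Mh; rewrite /arens bidual_act_comp_act mm' //.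
exact: is_dual_bidual_act.
Qed.

Lemma left_ideal_of_top_centre m m' : top_centre star [set: M] m ->
  is_bidual eM m' -> represents m m' ->
  top_centre star eM (m \o dual_act star ^~ e) /\
  represents m (m \o dual_act star ^~ e).
Proof.
move=> [Mm mC] eMm' mm'.
have eMdual h : is_dual [set: M] h -> is_dual eM h by apply: is_dual_sub.
have Mact h : is_dual eM h -> is_dual [set: M] (dual_act star h e).
  by apply: is_dual_act left_ideal_byP.
split; first split.
- exact: is_bidual_comp_act left_ideal_byP Mm.
- apply: (weakstar_continuous_adjoint (T := id) (S := dual_act star ^~ e)) mC.
  + exact: eMdual.
  + exact: Mact.
  + by move=> n; apply: is_bidual_sub.
  by move=> n h _ _; rewrite arens_comp_act.
move=> h Mh /=; rewrite mm' // mm'; last exact/Mact/eMdual.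
apply: bidual_eq_on eMm' (eMdual _ Mh) (eMdual _ (Mact _ (eMdual _ Mh))) _.
have starA x y z : star x (star y z) = star (star x y) z by case: star_ba.
by move=> _ [x _ <-]; rewrite /dual_act starA star1r.
Qed.

End RightIdentity.
End ArensModule.

Theorem proposition5 (K : numFieldType) (M : completeNormedModType K)
    (star : M -> M -> M) (e : M) :
  banach_algebra_mul star ->
  (forall mu, star mu e = mu) ->
  forall m : (M -> K) -> K, is_bidual [set: M] m ->
    ((exists m', top_centre star (left_ideal_by star e) m' /\ represents m m')
     <->
     (top_centre star [set: M] m /\
      exists m', is_bidual (left_ideal_by star e) m' /\ represents m m')).
Proof.
move=> star_ba star1r m Mm; split.
  move=> [m' [eMm' mm']]; split; first exact: top_centre_of_left_ideal eMm' mm'.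
  by exists m'; case: eMm'.
move=> [Zm [m' [eMm' mm']]]; exists (m \o dual_act star ^~ e).
exact: left_ideal_of_top_centre Zm eMm' mm'.
Qed.
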